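(* Let $K\ge 1$ be an integer, let $\Pi_1,\dots,\Pi_K$ be arbitrary probability distributions on $\mathcal{X}^1\times\mathcal{Y}$, let $(q_1,\dots,q_K)$ be a probability vector, let $\alpha\in(0,1)$, and let $n_1,\dots,n_K\ge 0$ be fixed (nonrandom) integers with $n=n_1+\dots+n_K$. Suppose the calibration data $(X_1,Y_1),\dots,(X_n,Y_n)$, with $X_i=(X_i^0,X_i^1)$, are generated independently as follows: for each $k\in[K]$ and each index $i\in\{n_1+\dots+n_{k-1}+1,\dots,n_1+\dots+n_k\}$, $X_i^0=k$ and $(X_i^1,Y_i)\sim\Pi_k$. Suppose the test point $(X_{n+1},Y_{n+1})$, $X_{n+1}=(X^0_{n+1},X^1_{n+1})$, is drawn independently of the calibration data from the distribution $Q$ given by $X^0_{n+1}\sim\textnormal{Multinomial}(q_1,\dots,q_K)$ (i.e. $\mathbb{P}\{X^0_{n+1}=k\}=q_k$) and $(X^1_{n+1},Y_{n+1})\mid X^0_{n+1}=k\ \sim\ \Pi_k$. Let $s:\mathcal{X}\times\mathcal{Y}\to\mathbb{R}$ be any fixed measurable score function, and let $\widehat{C}_n$ be the GWCP prediction set defined in the context. Then \[\mathbb{P}\left\{Y_{n+1}\in\widehat{C}_n(X_{n+1})\right\}\ \ge\ 1-\alpha-\max_{k:\,n_k>0}\{q_k/n_k\}.\]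
   Context: Features are $x=(x^0,x^1)\in\mathcal{X}=[K]\times\mathcal{X}^1$, where $x^0\in[K]=\{1,\dots,K\}$ is the group label. For a probability distribution $\mu$ on $\mathbb{R}\cup\{+\infty\}$ and $\tau\in(0,1]$, $\textnormal{Quantile}_{\tau}(\mu)=\inf\{t\in\mathbb{R}\cup\{+\infty\}:\mu([-\infty,t])\ge\tau\}$; $\delta_s$ denotes the point mass at $s$. Given calibration data, set $s_i=s(X_i,Y_i)$, $n_k=\sum_{i\le n}\mathbf{1}\{X_i^0=k\}$, and $\widehat{P}^{(k)}_{\textnormal{score}}=\frac{1}{n_k}\sum_{i\le n:\,X_i^0=k}\delta_{s_i}$ if $n_k>0$, while $\widehat{P}^{(k)}_{\textnormal{score}}=\delta_{+\infty}$ if $n_k=0$. The group-weighted conformal prediction (GWCP) set is $\widehat{C}_n(x)=\{y\in\mathcal{Y}: s(x,y)\le\widehat{q}\}$ with $\widehat{q}=\textnormal{Quantile}_{1-\alpha}\big(\sum_{k=1}^K q_k\widehat{P}^{(k)}_{\textnormal{score}}\big)$. *)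

From HB Require Import structures.
From mathcomp Require Import all_boot all_order all_algebra.
From mathcomp Require Import all_classical all_reals all_analysis.
Set Implicit Arguments. Unset Strict Implicit. Unset Printing Implicit Defensive.
Import Order.TTheory GRing.Theory Num.Theory.
Local Open Scope classical_set_scope.
Local Open Scope ring_scope.

Section GWCP.
Context {R : realType}.

(* A finitely supported distribution on R ∪ {+oo}, viewed as a set function on \bar R. *)
Definition point_mass (x : \bar R) : set (\bar R) -> R :=
  fun A => (x \in A)%:R.

Definition Phat (m : nat) (sc : 'I_m -> R) : set (\bar R) -> R :=
  if m == 0%N then point_mass +oo%E
  else fun A => (m%:R)^-1 * \sum_(j < m) point_mass (sc j)%:E A.

Definition mixture (K : nat) (q : 'I_K -> R) (mu : 'I_K -> set (\bar R) -> R) :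
  set (\bar R) -> R := fun A => \sum_(k < K) q k * mu k A.

Definition Quantile (tau : R) (mu : set (\bar R) -> R) : \bar R :=
  ereal_inf [set t : \bar R | t != -oo%E /\ tau <= mu [set x | (x <= t)%E]].

Definition gwcp_qhat (K : nat) (alpha : R) (q : 'I_K -> R) (nk : 'I_K -> nat)
  (sc : forall k : 'I_K, 'I_(nk k) -> R) : \bar R :=
  Quantile (1 - alpha) (mixture q (fun k => Phat (sc k))).

Definition gwcp_set (K : nat) (X1 Y : Type) (s : 'I_K -> X1 * Y -> R)
  (qhat : \bar R) (x : 'I_K * X1) : set Y :=
  [set y | ((s x.1 (x.2, y))%:E <= qhat)%E].

End GWCP.

(* Mutual independence of the calibration points Z k j and the test point
   (G, Zt), stated as the product rule on measurable rectangles. *)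
Definition gwcp_indep {R : realType} {d : measure_display} {T : measurableType d}
  (P : probability T R) {d1 : measure_display} (W : measurableType d1)
  (K : nat) (nk : 'I_K -> nat)
  (Z : forall k : 'I_K, 'I_(nk k) -> T -> W) (G : T -> 'I_K) (Zt : T -> W) : Prop :=
  forall (A : forall k : 'I_K, 'I_(nk k) -> set W) (k0 : 'I_K) (B : set W),
    (forall k j, measurable (A k j)) -> measurable B ->
    P [set w | (forall k j, A k j (Z k j w)) /\ G w = k0 /\ B (Zt w)] =
    ((\prod_(k < K) \prod_(j < nk k) P (Z k j @^-1` A k j)) *
      P [set w | G w = k0 /\ B (Zt w)])%E.

From HB Require Import structures.
From mathcomp Require Import all_boot all_order all_algebra.
From mathcomp Require Import all_classical all_reals all_analysis.
From mathcomp Require Import measurable_realfun lra.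
Import Order.TTheory GRing.Theory Num.Theory.
Local Open Scope classical_set_scope.
Local Open Scope ring_scope.

(* Give the calibration point j of group k the weight q_k / n_k.  By the
   characterisation of the quantile of a finite mixture, the test point is
   covered iff the weighted mass of calibration scores lying strictly below
   the test score is < 1 - alpha.  Given that the test group is k, the test
   point is exchangeable with each calibration point i of group k, and
   exchanging them moves that mass by at most q_k / n_k.  So the coverage
   probability is at least the expected weight of the calibration points i
   that are "self-ranked" at level tau = 1 - alpha - max_k q_k / n_k, i.e.
   the weighted mass of scores strictly below S_i is < tau; a deterministic
   counting argument shows that this weight is always at least tau (unless
   tau exceeds the total weight, in which case coverage is certain). *)

Definition wmass_lt {R : realDomainType} {I : finType} (w S : I -> R) (y : R) : R :=
  \sum_i w i * (S i < y)%R%:R.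

Definition wmass_le {R : realDomainType} {I : finType} (w S : I -> R) (y : R) : R :=
  \sum_i w i * (S i <= y)%R%:R.

Section WeightedMass.
Context {R : realDomainType} {I : finType} {w : I -> R}.
Hypothesis w_ge0 : forall i, 0 <= w i.

Lemma wmass_le_lt {S t y} : t < y -> wmass_le w S t <= wmass_lt w S y.
Proof.
move=> lt_ty; apply: ler_sum => i _; rewrite ler_wpM2l // ler_nat.
by case: (leP (S i) t) => // /le_lt_trans/(_ lt_ty)->.
Qed.

Lemma wmass_lt_homo S : {homo wmass_lt w S : y y' / y <= y'}.
Proof.
move=> y y' le_yy'; apply: ler_sum => i _; rewrite ler_wpM2l // ler_nat.
by case: (ltP (S i) y) => // /lt_le_trans/(_ le_yy')->.
Qed.

Lemma wmass_lt_as_le S y : exists2 t, t < y & wmass_le w S t = wmass_lt w S y.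
Proof.
pose t := \big[Order.max/(y - 1)]_(i | S i < y) S i.
have lt_ty : t < y by apply: bigmax_lt => //; rewrite ltrBlDr ltrDl.
exists t => //; apply: eq_bigr => i _; congr (_ * (nat_of_bool _)%:R).
apply/idP/idP => [/le_lt_trans->//|lt_Siy].
exact: (le_bigmax_cond (y - 1) (P := fun i => S i < y)).
Qed.

Lemma wmass_lt_dfwith S i0 x y : wmass_lt w (dfwith S i0 x) y <= wmass_lt w S y + w i0.
Proof.
rewrite /wmass_lt (bigD1 i0) //= [X in _ <= X + _](bigD1 i0) //= dfwithin.
rewrite (eq_bigr (fun i => w i * (S i < y)%R%:R)); last first.
  by move=> i ne_i; rewrite dfwithout // eq_sym.
have le_x : w i0 * (x < y)%R%:R <= w i0 by rewrite ler_piMr // lern1 leq_b1.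
have ge0_S : 0 <= w i0 * (S i0 < y)%R%:R by rewrite mulr_ge0.
lra.
Qed.

(* Let [i0] be, among the indices with [wmass_lt w S (S i) >= tau], one of
   least score.  By monotonicity these indices are exactly those with
   [S i0 <= S i], so the others carry the mass [wmass_lt w S (S i0) >= tau]. *)
Lemma wmass_self_lt_ge S tau : tau <= \sum_i w i ->
  tau <= \sum_i w i * (wmass_lt w S (S i) < tau)%R%:R.
Proof.
move=> le_tau_w; have [i1 Ni1|all_lt] := pickP [pred i | ~~ (wmass_lt w S (S i) < tau)].
  have [i0 Ni0 min_i0] := arg_minP S Ni1.
  move: Ni0; rewrite /= -leNgt => Ni0.
  have lt_iff i : (wmass_lt w S (S i) < tau) = (S i < S i0).
    apply/idP/idP => [lt_i|lt_i0]; last first.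
      by apply/negPn/negP => /min_i0; rewrite leNgt lt_i0.
    rewrite ltNge; apply/negP => /(wmass_lt_homo S) le_i0i.
    by move: lt_i; rewrite ltNge (le_trans Ni0 le_i0i).
  by under eq_bigr do rewrite lt_iff.
rewrite (eq_bigr w) // => i _.
by have /negbFE-> := all_lt i; rewrite mulr1.
Qed.

End WeightedMass.

Lemma measurable_preimage d d' (U : measurableType d) (V : measurableType d')
  (f : U -> V) (A : set V) :
  measurable_fun setT f -> measurable A -> measurable (f @^-1` A).
Proof. by move=> mf mA; rewrite -[X in measurable X]setTI; exact: mf. Qed.

Section WeightedProbability.
Context {R : realType} {d : measure_display} {T : measurableType d}.
Variable P : probability T R.

Lemma wsum_prob_ge (I : finType) (A : I -> set T) (w : I -> R) (c : R) :
  (forall i, measurable (A i)) -> (forall i, 0 <= w i) ->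
  (forall x, c <= \sum_i w i * \1_(A i) x) ->
  (c%:E <= \sum_i (w i)%:E * P (A i))%E.
Proof.
move=> mA w_ge0 le_c.
have [c_le0|/ltW c_ge0] := leP c 0.
  apply: (@le_trans _ _ 0%E); first by rewrite lee_fin.
  by apply: sume_ge0 => i _; rewrite mule_ge0 ?lee_fin.
have mwA i : measurable_fun setT (fun x => w i * \1_(A i) x).
  by apply: measurable_funM => //; exact: measurable_indic.
have -> : (\sum_i (w i)%:E * P (A i) = \sum_i \int[P]_x (w i * \1_(A i) x)%:E)%E.
  apply: eq_bigr => i _; under eq_integral do rewrite EFinM.
  rewrite ge0_integralZl_EFin //; last exact/measurable_EFinP/measurable_indic.
  by rewrite integral_indic // setIT.
rewrite -ge0_integral_sum //; last 2 first.
- by move=> i; exact/measurable_EFinP.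
- by move=> i x _; rewrite lee_fin mulr_ge0.
under eq_integral do rewrite sumEFin.
rewrite -[c%:E]mule1 -(probability_setT P) -integral_cst //.
apply: ge0_le_integral => //.
  by apply/measurable_EFinP; exact: measurable_sum.
by move=> x _; rewrite lee_fin.
Qed.

End WeightedProbability.

Definition scores (R : realType) (I : finType) := ((I -> R) * R)%type.
HB.instance Definition _ R I := gen_eqMixin (scores R I).
HB.instance Definition _ R I := gen_choiceMixin (scores R I).
HB.instance Definition _ (R : realType) I :=
  isPointed.Build (scores R I) (fun=> 0%R, 0%R).

Section ScoreSpace.
Context {R : realType} {I : finType}.

Definition score_rect (A : I -> set R) (B : set R) : set (scores R I) :=
  [set u | (forall i, A i (u.1 i)) /\ B u.2].

Definition score_rects : set (set (scores R I)) :=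
  [set D | exists A B,
    [/\ forall i, measurable (A i), measurable B & D = score_rect A B]].

End ScoreSpace.

Definition score_space (R : realType) (I : finType) :=
  g_sigma_algebraType (@score_rects R I).

Section ScoreSpaceTheory.
Context {R : realType} {I : finType}.
Local Notation Om := (score_space R I).

Lemma measurable_score_rect A B : (forall i, measurable (A i)) -> measurable B ->
  measurable (score_rect A B : set Om).
Proof. by move=> mA mB; apply: sub_sigma_algebra; exists A, B. Qed.

Lemma score_rects_setI_closed : setI_closed (@score_rects R I).
Proof.
move=> _ _ [A [B [mA mB ->]]] [A' [B' [mA' mB' ->]]].
exists (fun i => A i `&` A' i), (B `&` B'); split => //.
- by move=> i; exact: measurableI.
- exact: measurableI.
apply/seteqP; split => u /=.
  by move=> [[hA hB] [hA' hB']]; split => // i; split.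
by move=> [hAA' [hB hB']]; split; split => // i; have [] := hAA' i.
Qed.

Lemma score_measure_unique (m1 m2 : measure Om R) :
  (forall A B, (forall i, measurable (A i)) -> measurable B ->
     m1 (score_rect A B) = m2 (score_rect A B)) ->
  (m1 setT < +oo)%E -> forall D : set Om, measurable D -> m1 D = m2 D.
Proof.
move=> m12 m1_fin.
apply: (@measure_unique _ R Om score_rects (fun=> setT) erefl) => //.
- exact: score_rects_setI_closed.
- move=> _; exists (fun=> setT), setT; split => //.
  by apply/seteqP; split => u // _; split.
- by rewrite bigcup_const.
- by move=> _ [A [B [mA mB ->]]]; exact: m12.
Qed.

Lemma measurable_fun_score d' (T : measurableType d') (f : T -> Om) :
  (forall A B, (forall i, measurable (A i)) -> measurable B ->
     measurable (f @^-1` score_rect A B)) ->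
  measurable_fun setT f.
Proof.
move=> mf; apply: (@measurability _ _ T Om setT f score_rects erefl).
by move=> _ [_ [A [B [mA mB ->]]] <-]; rewrite setTI; exact: mf.
Qed.

Lemma measurable_score_coord i : measurable_fun setT (fun u : Om => u.1 i).
Proof.
move=> _ Y mY; rewrite setTI.
have -> : (fun u : Om => u.1 i) @^-1` Y = score_rect (dfwith (fun=> setT) i Y) setT.
  apply/seteqP; split => u /=; last by move=> [/(_ i)]; rewrite dfwithin.
  by move=> Yu; split => // j; case: dfwithP.
by apply: measurable_score_rect => // j; case: dfwithP.
Qed.

Lemma measurable_score_test : measurable_fun setT (fun u : Om => u.2).
Proof.
move=> _ Y mY; rewrite setTI.
have -> : (fun u : Om => u.2) @^-1` Y = score_rect (fun=> setT) Y.
  by apply/seteqP; split => u /=; [split|case].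
exact: measurable_score_rect.
Qed.

Lemma measurable_wmass_lt (w : I -> R) (f : Om -> R) c :
  measurable_fun setT f -> measurable [set u : Om | wmass_lt w u.1 (f u) < c].
Proof.
move=> mf; have mb : measurable_fun setT (fun b : bool => b%:R : R) by [].
have mwf : measurable_fun setT (fun u : Om => wmass_lt w u.1 (f u)).
  apply: measurable_sum => i; apply: measurable_funM => //.
  exact: measurableT_comp mb (measurable_fun_ltr (measurable_score_coord i) mf).
rewrite -[X in measurable X]setTI.
by have := mwf measurableT _ (measurable_itv `]-oo, c[); rewrite /= set_itvNyo.
Qed.

Definition score_swap (i0 : I) (u : Om) : Om := (dfwith u.1 i0 u.2, u.1 i0).

Lemma preimage_score_swap i0 A B :
  score_swap i0 @^-1` score_rect A B = score_rect (dfwith A i0 B) (A i0).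
Proof.
apply/seteqP; split => u /= [hA hB]; split; try by have := hA i0; rewrite /= dfwithin.
all: move=> i; have [<-|ne] := eqVneq i0 i; first by rewrite /= dfwithin.
all: by have := hA i; rewrite /= !dfwithout.
Qed.

Lemma measurable_score_swap i0 : measurable_fun setT (score_swap i0).
Proof.
apply: measurable_fun_score => A B mA mB; rewrite preimage_score_swap.
by apply: measurable_score_rect => // i; case: dfwithP.
Qed.

Section Events.
Variable w : I -> R.

Definition covered (beta : R) : set Om := [set u | wmass_lt w u.1 u.2 < beta].

Definition self_ranked (tau : R) (i : I) : set Om :=
  [set u | wmass_lt w u.1 (u.1 i) < tau].

Lemma measurable_covered beta : measurable (covered beta).
Proof. exact: measurable_wmass_lt measurable_score_test. Qed.

Lemma measurable_self_ranked tau i : measurable (self_ranked tau i).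
Proof. exact: measurable_wmass_lt (measurable_score_coord i). Qed.

End Events.

Section EventsNonneg.
Context {w : I -> R}.
Hypothesis w_ge0 : forall i, 0 <= w i.

Lemma covered_setT beta : \sum_i w i < beta -> covered w beta = setT.
Proof.
move=> lt_beta; apply/seteqP; split => u // _; apply: le_lt_trans lt_beta.
by apply: ler_sum => i _; rewrite ler_piMr // lern1 leq_b1.
Qed.

Lemma self_ranked_sub_swap {tau beta i} : tau + w i <= beta ->
  self_ranked w tau i `<=` score_swap i @^-1` covered w beta.
Proof.
move=> le_beta u lt_tau; rewrite /preimage /covered /=.
apply: le_lt_trans (wmass_lt_dfwith w_ge0 u.1 i u.2 (u.1 i)) _.
by rewrite -ltrBrDr (lt_le_trans lt_tau) // lerBrDr.
Qed.

End EventsNonneg.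

End ScoreSpaceTheory.

Section ScorePushforward.
Context {R : realType} {I : finType} {d : measure_display} {T : measurableType d}.
Variable P : probability T R.

Lemma prob_preimage_score_ext (f g : T -> score_space R I) (E F : set T) (c : R) :
  measurable_fun setT f -> measurable_fun setT g -> measurable E -> measurable F ->
  0 <= c ->
  (forall A B, (forall i, measurable (A i)) -> measurable B ->
     P (f @^-1` score_rect A B `&` E) = (c%:E * P (g @^-1` score_rect A B `&` F))%E) ->
  forall D, measurable D -> P (f @^-1` D `&` E) = (c%:E * P (g @^-1` D `&` F))%E.
Proof.
move=> mf mg mE mF c_ge0 fg_rect.
(* The measure instance of a pushforward depends on the measurability proof of
   the map, so it cannot be inferred and is named explicitly. *)
pose mfE : measure (score_space R I) R :=
  measure_function_pushforward__canonical__measure_function_Measure (mrestr P mE) mf.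
pose mgF : measure (score_space R I) R :=
  measure_function_pushforward__canonical__measure_function_Measure (mrestr P mF) mg.
apply: (@score_measure_unique R I mfE (mscale (NngNum c_ge0) mgF)).
- exact: fg_rect.
- rewrite /= /pushforward /mrestr setTI.
  by apply: le_lt_trans (probability_le1 _ _) _; rewrite ?ltry.
Qed.

End ScorePushforward.

Section GroupWeights.
Context {R : realType} {K : nat} (nk : 'I_K -> nat) (q : 'I_K -> R).

Definition calib_index := {k : 'I_K & 'I_(nk k)}.

Definition group_weight (i : calib_index) : R := q (tag i) / (nk (tag i))%:R.

Definition group_scores (S : calib_index -> R) (k : 'I_K) (j : 'I_(nk k)) : R :=
  S (Tagged (fun k => 'I_(nk k)) j).

Lemma sum_calib_index {M : nmodType} (F : calib_index -> M) :
  \sum_(i : calib_index) F i = \sum_(k < K) \sum_(j < nk k) F (Tagged _ j).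
Proof. by rewrite sig_big_dep; apply: eq_bigr => -[]. Qed.

Lemma mixture_Phat_le (S : calib_index -> R) t :
  mixture q (fun k => Phat (group_scores S k)) [set x | (x <= t%:E)%E] =
  wmass_le group_weight S t.
Proof.
rewrite /mixture /wmass_le sum_calib_index; apply: eq_bigr => k _.
rewrite /Phat; case: eqP => [nk0|/eqP nk_neq0].
  rewrite big1 ?mulr0; last by move=> [j lt_j]; exfalso; move: lt_j; rewrite nk0.
  rewrite /point_mass mulr_natr mulrb.
  by case: ifP => //; rewrite in_setE /= leye_eq => /eqP.
rewrite mulrA big_distrr; apply: eq_bigr => j _; rewrite /point_mass /group_weight /=.
congr (_ * (nat_of_bool _)%:R).
by rewrite -lee_fin; apply/idP/idP => [/set_mem|/mem_set].
Qed.

Lemma group_weight_le_max i :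
  group_weight i <= \big[Num.max/0]_(k < K | nk k != 0%N) (q k / (nk k)%:R).
Proof.
have nk_neq0 : nk (tag i) != 0%N.
  by case: i => k j /=; rewrite -lt0n (leq_ltn_trans _ (ltn_ord j)).
exact: (le_bigmax_cond 0 (P := fun k => nk k != 0%N) _ nk_neq0).
Qed.

End GroupWeights.

Section GroupWeightsNonneg.
Context {R : realType} {K : nat} {nk : 'I_K -> nat} {q : 'I_K -> R}.
Hypothesis q_ge0 : forall k, 0 <= q k.

Lemma group_weight_ge0 i : 0 <= group_weight nk q i.
Proof. by rewrite divr_ge0. Qed.

Lemma le_Quantile_mixture (S : calib_index nk -> R) tau y :
  (y%:E <= Quantile tau (mixture q (fun k => Phat (group_scores nk S k))))%E <->
  wmass_lt (group_weight nk q) S y < tau.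
Proof.
split=> [/ereal_infP le_y_inf|lt_tau].
  rewrite ltNge; apply/negP => le_tau.
  have [t lt_ty le_t] := wmass_lt_as_le (w := group_weight nk q) S y.
  suff : (y%:E <= t%:E)%E by rewrite lee_fin leNgt lt_ty.
  by apply: le_y_inf; split => //; rewrite mixture_Phat_le le_t.
apply/ereal_infP => -[r| |] [_ le_tau] //; last by rewrite leey.
rewrite mixture_Phat_le in le_tau; rewrite lee_fin leNgt; apply/negP => lt_ry.
have := le_trans le_tau (wmass_le_lt group_weight_ge0 lt_ry).
by rewrite leNgt lt_tau.
Qed.

End GroupWeightsNonneg.

Section GWCPModel.
Context {R : realType} {d : measure_display} {T : measurableType d}
  {d1 d2 : measure_display} {X1 : measurableType d1} {Y : measurableType d2}
  {K : nat} {P : probability T R} {Pi : 'I_K -> probability (X1 * Y)%type R}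
  {q : 'I_K -> R} {nk : 'I_K -> nat} {s : 'I_K -> (X1 * Y)%type -> R}
  {Z : forall k : 'I_K, 'I_(nk k) -> T -> (X1 * Y)%type}
  {G : T -> 'I_K} {Zt : T -> (X1 * Y)%type}.
Hypotheses (q_ge0 : forall k, 0 <= q k) (q_sum1 : \sum_(k < K) q k = 1)
  (ms : forall k, measurable_fun setT (s k))
  (mZ : forall k j, measurable_fun setT (Z k j))
  (mG : forall k, measurable (G @^-1` [set k]))
  (mZt : measurable_fun setT Zt)
  (Z_law : forall k j (A : set (X1 * Y)%type), measurable A ->
     P (Z k j @^-1` A) = Pi k A)
  (test_law : forall k (A : set (X1 * Y)%type), measurable A ->
     P [set x | G x = k /\ A (Zt x)] = ((q k)%:E * Pi k A)%E)
  (indep : gwcp_indep P Z G Zt).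

Local Notation Ix := (calib_index nk).
Local Notation w := (group_weight nk q).
Local Notation Om := (score_space R Ix).

Definition calib_scores (x : T) (i : Ix) : R := s (tag i) (Z (tag i) (tagged i) x).
Definition test_score (x : T) : R := s (G x) (Zt x).
Definition score_pair (x : T) : Om := (calib_scores x, test_score x).
(* Forgets the test score, so that its events are independent of the group [G]. *)
Definition calib_pair (x : T) : Om := (calib_scores x, 0).

Lemma measurable_calib_event (A : Ix -> set R) : (forall i, measurable (A i)) ->
  measurable [set x | forall i, A i (calib_scores x i)].
Proof.
move=> mA; have -> : [set x | forall i, A i (calib_scores x i)] =
    \bigcap_(i in setT) (Z (tag i) (tagged i) @^-1` (s (tag i) @^-1` A i)).
  by apply/seteqP; split => [x Ax i _|x Ax i]; [exact: (Ax i) | exact: (Ax i I)].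
apply: fin_bigcap_measurable; first exact: finite_finset.
by move=> i _; do 2 apply: measurable_preimage => //.
Qed.

Lemma measurable_test_event (B : set R) : measurable B ->
  measurable [set x | B (test_score x)].
Proof.
move=> mB; have -> : [set x | B (test_score x)] =
    \bigcup_(k in setT) (G @^-1` [set k] `&` Zt @^-1` (s k @^-1` B)).
  by apply/seteqP; split => [x Bx|x [k _ [/= <-]]] //; exists (G x).
apply: fin_bigcup_measurable; first exact: finite_finset.
by move=> k _; apply: measurableI => //; do 2 apply: measurable_preimage => //.
Qed.

Lemma measurable_score_pair : measurable_fun setT score_pair.
Proof.
apply: measurable_fun_score => A B mA mB.
have -> : score_pair @^-1` score_rect A B =
  [set x | forall i, A i (calib_scores x i)] `&` [set x | B (test_score x)] by [].
apply: measurableI; [exact: measurable_calib_event | exact: measurable_test_event].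
Qed.

Lemma measurable_calib_pair : measurable_fun setT calib_pair.
Proof.
apply: measurable_fun_score => A B mA mB.
have -> : calib_pair @^-1` score_rect A B =
  [set x | forall i, A i (calib_scores x i)] `&` [set _ | B 0] by [].
apply: measurableI; first exact: measurable_calib_event.
by rewrite -[X in measurable X]setTI; exact: (measurable_cst (0 : R)).
Qed.

Lemma prob_group_partition (E : set T) : measurable E ->
  P E = (\sum_(k < K) P (E `&` G @^-1` [set k]))%E.
Proof.
move=> mE; rewrite -measure_bigsetU_ord; last 2 first.
- by move=> k; exact: measurableI.
- apply/trivIsetP => k k' _ _ ne_kk'.
  apply/seteqP; split => // x [[_ /= Gk] [_ /= Gk']].
  by move: ne_kk'; rewrite -Gk -Gk' eqxx.
congr (P _); apply/seteqP; split => [x Ex|x].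
  by rewrite (bigD1 (G x)) //=; left.
by elim/big_ind: _ => //= [A B hA hB [/hA|/hB] //|k _ []].
Qed.

Lemma prob_score_rect_group (A : Ix -> set R) (B : set R) k :
  (forall i, measurable (A i)) -> measurable B ->
  P (score_pair @^-1` score_rect A B `&` G @^-1` [set k]) =
  ((\prod_(i : Ix) Pi (tag i) (s (tag i) @^-1` A i)) *
   ((q k)%:E * Pi k (s k @^-1` B)))%E.
Proof.
move=> mA mB.
have msA k' (j : 'I_(nk k')) : measurable (s k' @^-1` A (Tagged _ j)).
  exact: measurable_preimage.
have msB : measurable (s k @^-1` B) by exact: measurable_preimage.
have -> : score_pair @^-1` score_rect A B `&` G @^-1` [set k] =
    [set x | (forall k' j, (s k' @^-1` A (Tagged _ j)) (Z k' j x)) /\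
             G x = k /\ (s k @^-1` B) (Zt x)].
  apply/seteqP; split => x /=.
  - by move=> [[Ax Bx] Gx]; rewrite -Gx; split => // k' j; exact: (Ax (Tagged _ j)).
  - move=> [Ax [Gx Bx]]; split => //; split => [[k' j]|]; first exact: Ax.
    by rewrite /= /test_score Gx.
rewrite (indep _ _ _ msA msB) (test_law _ _ msB) sig_big_dep /=; congr (_ * _)%E.
by apply: eq_bigr => -[k' j] _; exact: Z_law.
Qed.

Lemma prob_calib_rect (A : Ix -> set R) : (forall i, measurable (A i)) ->
  P (score_pair @^-1` score_rect A setT) =
  (\prod_(i : Ix) Pi (tag i) (s (tag i) @^-1` A i))%E.
Proof.
move=> mA; rewrite prob_group_partition; last first.
  apply: measurable_preimage measurable_score_pair _.
  exact: measurable_score_rect.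
under eq_bigr do rewrite prob_score_rect_group // preimage_setT probability_setT mule1.
rewrite -ge0_sume_distrr; last by move=> k _; rewrite lee_fin.
by rewrite sumEFin q_sum1 mule1.
Qed.

Lemma score_pair_swap_invariant (i : Ix) (D : set Om) :
  measurable D ->
  P (score_pair @^-1` D `&` G @^-1` [set tag i]) =
  P ((score_swap i \o score_pair) @^-1` D `&` G @^-1` [set tag i]).
Proof.
move=> mD; rewrite -[RHS]mul1e; apply: prob_preimage_score_ext => //.
- exact: measurable_score_pair.
- exact: measurableT_comp (measurable_score_swap i) measurable_score_pair.
move=> A B mA mB; rewrite mul1e (comp_preimage _ score_pair) preimage_score_swap.
rewrite !prob_score_rect_group //; last by move=> i'; case: dfwithP.
rewrite (bigD1 i) // [in RHS](bigD1 i) //= dfwithin.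
rewrite [in RHS](eq_bigr (fun i' => Pi (tag i') (s (tag i') @^-1` A i'))); last first.
  by move=> i' ne_i'; rewrite dfwithout // eq_sym.
rewrite [LHS]muleC [RHS]muleC -!muleA; congr (_ * _)%E; exact: muleCA.
Qed.

Lemma calib_pair_group_indep k (D : set Om) : measurable D ->
  P (calib_pair @^-1` D `&` G @^-1` [set k]) = ((q k)%:E * P (calib_pair @^-1` D))%E.
Proof.
move=> mD; rewrite -[in RHS](setIT (calib_pair @^-1` D)).
apply: prob_preimage_score_ext => //; try exact: measurable_calib_pair.
move=> A B mA mB; rewrite setIT.
have [B0|nB0] := pselect (B 0); last first.
  have -> : calib_pair @^-1` score_rect A B = set0 by apply/seteqP; split => x // [].
  by rewrite set0I !measure0 mule0.
have -> : calib_pair @^-1` score_rect A B = score_pair @^-1` score_rect A setT.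
  by apply/seteqP; split => x /= [].
rewrite prob_score_rect_group // preimage_setT probability_setT mule1.
by rewrite muleC prob_calib_rect.
Qed.

Lemma self_ranked_le_swap_covered tau beta (i : Ix) : tau + w i <= beta ->
  ((w i)%:E * P (calib_pair @^-1` self_ranked w tau i)
   <= ((nk (tag i))%:R^-1)%:E *
      P (score_pair @^-1` covered w beta `&` G @^-1` [set tag i]))%E.
Proof.
move=> le_beta; have mD := measurable_self_ranked w tau i.
rewrite EFinM -muleA muleCA -calib_pair_group_indep //.
apply: lee_wpmul2l; first by rewrite lee_fin invr_ge0.
rewrite score_pair_swap_invariant; last exact: measurable_covered.
apply: le_measure; rewrite ?inE.
- by apply: measurableI => //; exact: measurable_preimage measurable_calib_pair mD.
- apply: measurableI => //; apply: measurable_preimage (measurable_covered _ _).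
  exact: measurableT_comp (measurable_score_swap i) measurable_score_pair.
- move=> x [Dx Gx]; split => //.
  exact: (self_ranked_sub_swap (group_weight_ge0 q_ge0) le_beta (score_pair x) Dx).
Qed.

Lemma group_coverage_ge k tau beta : (forall i, tau + w i <= beta) ->
  (\sum_(j < nk k) (w (Tagged _ j))%:E *
     P (calib_pair @^-1` self_ranked w tau (Tagged _ j))
   <= P (score_pair @^-1` covered w beta `&` G @^-1` [set k]))%E.
Proof.
move=> le_beta; set C := P (_ `&` _).
have [nk0|nk_gt0] := posnP (nk k).
  by rewrite big1 ?measure_ge0 // => j _; exfalso; move: (ltn_ord j); rewrite {2}nk0.
have -> : C = (\sum_(j < nk k) ((nk k)%:R^-1)%:E * C)%E.
  rewrite -ge0_sume_distrl; last by move=> j _; rewrite lee_fin invr_ge0.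
  rewrite sumEFin sumr_const card_ord -[_ *+ _]mulr_natr mulVf ?mul1e //.
  by rewrite pnatr_eq0 -lt0n.
by apply: lee_sum => j _; exact: self_ranked_le_swap_covered.
Qed.

Lemma coverage_ge_self_ranked tau beta : (forall i, tau + w i <= beta) ->
  (\sum_(i : Ix) (w i)%:E * P (calib_pair @^-1` self_ranked w tau i)
   <= P (score_pair @^-1` covered w beta))%E.
Proof.
move=> le_beta; rewrite sum_calib_index prob_group_partition; last first.
  exact: measurable_preimage measurable_score_pair (measurable_covered _ _).
by apply: lee_sum => k _; exact: group_coverage_ge.
Qed.

Lemma self_ranked_mass_ge tau : tau <= \sum_i w i ->
  (tau%:E <= \sum_(i : Ix) (w i)%:E * P (calib_pair @^-1` self_ranked w tau i))%E.
Proof.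
move=> le_tau; apply: wsum_prob_ge => [i||x].
- exact: measurable_preimage measurable_calib_pair (measurable_self_ranked _ _ _).
- exact: group_weight_ge0.
under eq_bigr => i _ do rewrite indicE mem_setE.
exact: wmass_self_lt_ge (group_weight_ge0 q_ge0) (calib_scores x) tau le_tau.
Qed.

Lemma gwcp_coverage_event alpha :
  [set x | gwcp_set s (gwcp_qhat alpha q (fun k j => s k (Z k j x)))
                    (G x, (Zt x).1) (Zt x).2] =
  score_pair @^-1` covered w (1 - alpha).
Proof.
apply/seteqP; split => x; rewrite /gwcp_set /gwcp_qhat /= -surjective_pairing.
- exact: (le_Quantile_mixture q_ge0 (calib_scores x) _ _).1.
- exact: (le_Quantile_mixture q_ge0 (calib_scores x) _ _).2.
Qed.

End GWCPModel.

Theorem theorem1 (R : realType) (d : measure_display) (T : measurableType d)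
  (P : probability T R)
  (d1 d2 : measure_display) (X1 : measurableType d1) (Y : measurableType d2)
  (K : nat) (hK : (1 <= K)%N)
  (Pi : 'I_K -> probability (X1 * Y)%type R)
  (q : 'I_K -> R) (hq0 : forall k, 0 <= q k) (hq1 : \sum_(k < K) q k = 1)
  (alpha : R) (halpha : 0 < alpha < 1)
  (nk : 'I_K -> nat)
  (s : 'I_K -> (X1 * Y)%type -> R) (hs : forall k, measurable_fun setT (s k))
  (Z : forall k : 'I_K, 'I_(nk k) -> T -> (X1 * Y)%type)
  (G : T -> 'I_K) (Zt : T -> (X1 * Y)%type)
  (hZm : forall k j, measurable_fun setT (Z k j))
  (hGm : forall k, measurable (G @^-1` [set k]))
  (hZtm : measurable_fun setT Zt)
  (hZlaw : forall k j (A : set (X1 * Y)%type), measurable A ->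
     P (Z k j @^-1` A) = Pi k A)
  (htest : forall k (A : set (X1 * Y)%type), measurable A ->
     P [set w | G w = k /\ A (Zt w)] = ((q k)%:E * Pi k A)%E)
  (hindep : gwcp_indep P Z G Zt) :
  let qhat := fun w => gwcp_qhat alpha q (fun k j => s k (Z k j w)) in
  ((1 - alpha - \big[Num.max/0]_(k < K | nk k != 0%N) (q k / (nk k)%:R))%:E
    <= P [set w | gwcp_set s (qhat w) (G w, (Zt w).1) (Zt w).2])%E.
Proof.
cbv zeta; rewrite (gwcp_coverage_event hq0).
set ws := \big[Num.max/0]_(k < K | nk k != 0%N) _.
have ws_ge0 : 0 <= ws by exact: bigmax_ge_id.
have [le_tau|lt_tau] := leP (1 - alpha - ws) (\sum_i group_weight nk q i).
  have le_beta i : 1 - alpha - ws + group_weight nk q i <= 1 - alpha.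
    by have := group_weight_le_max nk q i; rewrite -/ws; lra.
  apply: le_trans (self_ranked_mass_ge hq0 hs hZm _ le_tau) _.
  exact: coverage_ge_self_ranked hq0 hq1 hs hZm hGm hZtm hZlaw htest hindep _ _ le_beta.
rewrite covered_setT ?preimage_setT ?probability_setT ?lee_fin; last 2 first.
- exact: group_weight_ge0.
- lra.
by case/andP: halpha; lra.
Qed.
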